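(* There are constants $C_5$ and $\Delta_1$ (depending only on $r$) such that for every subset $U\subset V_n$ with $|U|=m$ and every $\alpha\in(0,1)$, $$\mathbb P\big(e(U,U^c)\le\alpha r|U|\big)\le C_5\exp\left(-\frac r2(1-\alpha)\,m\log(n/m)+\Delta_1 m\right).$$
   Context: Fix an integer $r\ge3$, let $V_n=\{1,\dots,n\}$ with $rn$ even, and let $\mathbb P$ be the law of the random multigraph $G_n$ on $V_n$ obtained by giving each vertex $r$ half-edges and pairing all $rn$ half-edges uniformly at random. For $U\subset V_n$, $e(U,U^c)$ is the number of edges of $G_n$ (pairs of matched half-edges) with one endpoint in $U$ and the other in $U^c=V_n\setminus U$. *)

From mathcomp Require Import all_boot all_fingroup.
From Stdlib Require Import Reals.

Set Implicit Arguments.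
Unset Strict Implicit.
Unset Printing Implicit Defensive.

(* Half-edges: vertex i in 'I_n (vertices 1..n shifted to 0..n-1), slot j in 'I_r. *)
Definition half (n r : nat) : finType := ('I_n * 'I_r)%type.

Definition is_pairing (n r : nat) (s : {perm half n r}) : bool :=
  [forall h, (s h != h) && (s (s h) == h)].

(* e(U,U^c): number of matched pairs {h, s h} with one endpoint in U and the
   other outside.  Each such edge is counted exactly once, via its half-edge
   whose vertex lies in U. *)
Definition cut_edges (n r : nat) (U : {set 'I_n}) (s : {perm half n r}) : nat :=
  #|[set h : half n r | (h.1 \in U) && ((s h).1 \notin U)]|.

Definition pairings (n r : nat) : {set {perm half n r}} :=
  [set s | is_pairing s].

(* P(e(U,U^c) <= k) under the uniform law on pairings (configuration model). *)
Definition prob_cut_le (n r : nat) (U : {set 'I_n}) (k : R) : R :=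
  (INR #|[set s in pairings n r |
          if Rle_dec (INR (cut_edges U s)) k then true else false]|
   / INR #|pairings n r|)%R.

From Pilot Require Import Defs.
From mathcomp Require Import all_boot all_fingroup.
From Stdlib Require Import Reals Lra.
From Stdlib Require Znat.
From mathcomp Require Import zify.
Import Pilot.Defs. (* [half] must denote [Defs.half], not [ssrnat.half] *)

Set Implicit Arguments.
Unset Strict Implicit.
Unset Printing Implicit Defensive.

(* Let A be the r|U| half-edges at U.  A pairing with e(U, U^c) <= alpha r|U|
   pairs at least (1 - alpha) r|U| half-edges of A among themselves.  Let F_L
   be the set of pairings pairing at least L half-edges of A inside A.
   Exchanging an inner pair {x, s x} with an outer pair {y, s y}, i.e.
   conjugating s by the transposition (x y), gives by double counting
     |F_L| * L * (rn - 2|A| + L) <= |F_(L-2)| * |A|^2,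
   so iterating t ~ (1 - alpha) r|U|/2 times bounds the probability by
   (e |A|^2 / (t (rn - 2|A|)))^t, using t! >= (t/e)^t; when n >= 4|U| this is
   at most (4e|U| / ((1 - alpha) n))^((1 - alpha) r|U|/2).
   When n < 4|U| the right-hand side of the claim is at least 1. *)

Definition fpf_involution (T : finType) (s : {perm T}) : bool :=
  [forall h, (s h != h) && (s (s h) == h)].

Definition matched_in (T : finType) (A : {set T}) (s : {perm T}) : nat :=
  #|A :&: s @^-1: A|.

Definition matchings_ge (T : finType) (A : {set T}) (L : nat) : {set {perm T}} :=
  [set s | fpf_involution s && (L <= matched_in A s)].

Lemma card_pairs_dep (X Y : finType) (S : {set X}) (f : X -> {set Y}) :
  #|[set p : X * Y | (p.1 \in S) && (p.2 \in f p.1)]| = \sum_(x in S) #|f x|.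
Proof.
rewrite -sum1_card (eq_bigl (fun p : X * Y => (p.1 \in S) && (p.2 \in f p.1)));
  last by move=> p; rewrite inE.
rewrite -(pair_big_dep (mem S) (fun x y => y \in f x) (fun _ _ => 1)) /=.
by apply: eq_bigr => x _; rewrite sum1_card.
Qed.

Section Switching.

Variables (T : finType) (A : {set T}).

Lemma fpf_involutionP (s : {perm T}) :
  reflect (forall h, s h != h /\ s (s h) = h) (fpf_involution s).
Proof.
apply: (iffP forallP) => H h; have := H h.
  by case/andP => -> /eqP.
by case=> -> ->; rewrite eqxx.
Qed.

Lemma conj_tpermE (s : {perm T}) x y h :
  (s ^ tperm x y)%g h = tperm x y (s (tperm x y h)).
Proof. by rewrite -{1}(tpermK x y h) permJ. Qed.

Lemma fpf_involution_conj (s : {perm T}) x y :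
  fpf_involution s -> fpf_involution (s ^ tperm x y)%g.
Proof.
move/fpf_involutionP=> H; apply/fpf_involutionP=> h; rewrite !conj_tpermE tpermK.
have [sh_neq ssh] := H (tperm x y h); rewrite ssh tpermK; split=> //.
by apply: contra_neq sh_neq => E; rewrite -[in RHS]E tpermK.
Qed.

Lemma card_out_matched_in_le (s : {perm T}) :
  fpf_involution s -> #|~: A :&: s @^-1: A| <= #|A :\: s @^-1: A|.
Proof.
move/fpf_involutionP=> H; apply: leq_trans (leq_imset_card s _).
apply/subset_leq_card/subsetP=> h; rewrite !inE => /andP [hA shA].
apply/imsetP; exists (s h); last by rewrite (proj2 (H h)).
by rewrite !inE (proj2 (H h)) hA shA.
Qed.

(* Swapping [y] (outside [A], matched outside [A]) with [x] (inside [A],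
   matched inside [A]) only breaks the matched pair {x, s x} inside [A]. *)
Lemma matched_in_conj_tperm (s : {perm T}) x y :
  fpf_involution s -> x \in A -> s x \in A -> y \notin A -> s y \notin A ->
  matched_in A s <= matched_in A (s ^ tperm x y)%g + 2.
Proof.
move=> /fpf_involutionP H xA sxA yA syA.
have sub : A :&: s @^-1: A \subset
           (A :&: (s ^ tperm x y)%g @^-1: A) :|: [set x; s x].
  apply/subsetP=> h; rewrite !inE => /andP [hA shA].
  have [<-|xh] := eqVneq x h; first by rewrite orbT.
  have [<-|sxh] := eqVneq (s x) h; first by rewrite !orbT.
  have yh : y != h by apply: contraNneq yA => ->.
  have xsh : x != s h by apply: contra_neq sxh => ->; rewrite (proj2 (H h)).
  have ysh : y != s h by apply: contraNneq yA => ->.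
  by rewrite hA conj_tpermE (tpermD xh yh) (tpermD xsh ysh) shA.
apply: leq_trans (subset_leq_card sub) _.
by rewrite (leq_trans (leq_card_setU _ _)) // leq_add2l cards2; case: (_ != _).
Qed.

(* Double counting of the switchings (s, x, y), x matched inside A and y
   matched outside A: each s in [matchings_ge A L] has at least
   L * (#|T| - 2 #|A| + L) of them, and the switching is recovered from
   s ^ tperm x y, x and s x, which lie in [matchings_ge A (L - 2)], A and A. *)
Lemma matchings_ge_switch L :
  2 * #|A| <= #|T| ->
  #|matchings_ge A L| * (L * (#|T| - 2 * #|A| + L))
    <= #|matchings_ge A (L - 2)| * (#|A| * #|A|).
Proof.
move=> A_small.
pose swaps s := setX (A :&: s @^-1: A) (~: A :\: s @^-1: A).
pose P := [set p : {perm T} * (T * T) |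
           (p.1 \in matchings_ge A L) && (p.2 \in swaps p.1)].
pose switch (p : {perm T} * (T * T)) :=
  ((p.1 ^ tperm p.2.1 p.2.2)%g, (p.2.1, (p.1 ^ tperm p.2.1 p.2.2)%g p.2.2)).
have card_P : #|matchings_ge A L| * (L * (#|T| - 2 * #|A| + L)) <= #|P|.
  rewrite /P (card_pairs_dep (matchings_ge A L) swaps) -sum_nat_const.
  apply: leq_sum => s.
  rewrite inE => /andP [inv_s L_le]; rewrite cardsX.
  have := cardsID (s @^-1: A) A; have := cardsID (s @^-1: A) (~: A).
  have := cardsC A; have := card_out_matched_in_le inv_s.
  move: L_le; rewrite /matched_in; nia.
have switch_inj : injective switch.
  move=> [s1 [x1 y1]] [s2 [x2 y2]] [E1 x12 E3]; subst x2.
  have y12 : y1 = y2 by move: E3; rewrite E1 => /perm_inj.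
  by move: E1; rewrite y12 => /conjg_inj ->.
have switch_sub : switch @: P \subset
                  setX (matchings_ge A (L - 2)) (setX A A).
  apply/subsetP=> q /imsetP [[s [x y]]].
  rewrite !inE /= => /andP [/andP [inv_s L_le]].
  move=> /andP [/andP [xA sxA] /andP [syA yA]] ->.
  have := matched_in_conj_tperm inv_s xA sxA yA syA.
  rewrite fpf_involution_conj //= xA; move/fpf_involutionP: inv_s => H.
  have xsx : x != s x by rewrite eq_sym (proj1 (H x)).
  have ysx : y != s x by apply: contraNneq yA => ->.
  by rewrite conj_tpermE tpermR tpermD //; lia.
apply: leq_trans card_P _; rewrite -(card_imset _ switch_inj).
by apply: leq_trans (subset_leq_card switch_sub) _; rewrite !cardsX.
Qed.

Lemma matchings_ge_tail t :
  2 * #|A| <= #|T| ->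
  #|matchings_ge A (2 * t - 1)| * (t`! * expn (#|T| - 2 * #|A|) t)
    <= #|matchings_ge A 0| * expn (#|A| * #|A|) t.
Proof.
move=> A_small; elim: t => [|t IH]; first by rewrite muln1.
have := matchings_ge_switch (2 * t.+1 - 1) A_small.
rewrite (_ : 2 * t.+1 - 1 - 2 = 2 * t - 1); last by lia.
set D := #|T| - 2 * #|A|; set a := #|_|; set b := #|_| => step.
have step' : a * (t.+1 * D) <= b * (#|A| * #|A|).
  by apply: leq_trans step; apply: leq_mul => //; apply: leq_mul; lia.
apply: (@leq_trans (b * (#|A| * #|A|) * (t`! * expn D t))).
  by apply: leq_trans (leq_mul step' (leqnn _)); rewrite factS expnS; nia.
by rewrite mulnAC expnS [X in _ <= X]mulnCA mulnC leq_mul2l IH orbT.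
Qed.

End Switching.

Lemma card_halves_at (n r : nat) (U : {set 'I_n}) :
  #|[set h : half n r | h.1 \in U]| = #|U| * r.
Proof.
rewrite (_ : [set h : half n r | h.1 \in U] = setX U [set: 'I_r]).
  by rewrite cardsX cardsT card_ord.
by apply/setP=> -[i j]; rewrite !inE andbT.
Qed.

Lemma pairingsE (n r : nat) (A : {set half n r}) :
  pairings n r = matchings_ge A 0.
Proof. by apply/setP=> s; rewrite !inE leq0n andbT. Qed.

Lemma cut_edges_add_matched_in (n r : nat) (U : {set 'I_n}) (s : {perm half n r}) :
  cut_edges U s + matched_in [set h : half n r | h.1 \in U] s = #|U| * r.
Proof.
rewrite -card_halves_at -(cardsID (s @^-1: [set h : half n r | h.1 \in U])).
rewrite addnC /matched_in; congr (_ + _).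
by apply: eq_card=> h; rewrite !inE andbC.
Qed.

Local Open Scope R_scope.

Lemma exp_le_exp x y : x <= y -> exp x <= exp y.
Proof. by case/Rle_lt_or_eq_dec=> [/exp_increasing/Rlt_le|->]; last exact: Rle_refl. Qed.

Lemma ln_le_sub1 x : 0 < x -> ln x <= x - 1.
Proof. by move=> x_pos; have := exp_ineq1_le (ln x); rewrite exp_ln //; lra. Qed.

Lemma INR_expn (a b : nat) : INR (expn a b) = INR a ^ b.
Proof. by elim: b => [|b IH]; rewrite ?expnS ?mult_INR ?IH. Qed.

Lemma exp_pow x (t : nat) : exp x ^ t = exp (INR t * x).
Proof. by rewrite -Rpower_pow; [rewrite /Rpower ln_exp | exact: exp_pos]. Qed.

Lemma pow_succ_le_exp1 (t : nat) : INR t.+1 ^ t <= exp 1 * INR t ^ t.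
Proof.
case: t => [|t]; first by rewrite /= Rmult_1_r; have := exp_ineq1_le 1; lra.
set u := INR t.+1; have u_pos : 0 < u by apply/lt_0_INR/ltP.
have -> : INR t.+2 = u * (1 + / u) by rewrite S_INR -/u; field; lra.
rewrite Rpow_mult_distr [exp 1 * _]Rmult_comm.
apply: Rmult_le_compat_l; first by apply: pow_le; lra.
apply: Rle_trans (_ : exp (/ u) ^ t.+1 <= _).
  apply: pow_incr; have := exp_ineq1_le (/ u).
  by have := Rinv_0_lt_compat _ u_pos; lra.
by rewrite exp_pow -/u Rinv_r; lra.
Qed.

Lemma pow_le_fact_exp1 (t : nat) : INR t ^ t <= INR t`! * exp 1 ^ t.
Proof.
elim: t => [|t IH]; first by rewrite /=; lra.
rewrite factS mult_INR [INR t.+1 ^ t.+1]/= [exp 1 ^ t.+1]/=.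
have t1_ge0 := pos_INR t.+1; have e_pos := exp_pos 1.
apply: Rle_trans (_ : INR t.+1 * (exp 1 * (INR t`! * exp 1 ^ t)) <= _); last by lra.
apply/Rmult_le_compat_l/(Rle_trans _ _ _ (pow_succ_le_exp1 t)) => //.
by apply: Rmult_le_compat_l; lra.
Qed.

Lemma div_le_pow_of_fact_bound (a b f d k x : R) (t : nat) :
  0 <= a -> 0 < b -> 0 < x -> 0 < d ->
  x ^ t <= f * exp 1 ^ t -> a * (f * d ^ t) <= b * k ^ t ->
  a / b <= (k * exp 1 / (x * d)) ^ t.
Proof.
move=> a_ge0 b_pos x_pos d_pos x_le a_le.
have xd_pos : 0 < (x * d) ^ t by apply: pow_lt; nra.
apply: (Rmult_le_reg_r (b * (x * d) ^ t)); first nra.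
have -> : a / b * (b * (x * d) ^ t) = a * (x * d) ^ t by field; lra.
have -> : (k * exp 1 / (x * d)) ^ t * (b * (x * d) ^ t) = b * k ^ t * exp 1 ^ t.
  rewrite (Rmult_comm b) -Rmult_assoc -Rpow_mult_distr.
  rewrite (_ : k * exp 1 / (x * d) * (x * d) = k * exp 1); last by field; nra.
  by rewrite Rpow_mult_distr; ring.
have d_ge0 : 0 <= d ^ t by apply: pow_le; lra.
have e_ge0 : 0 <= exp 1 ^ t by apply: pow_le; have := exp_pos 1; lra.
apply: Rle_trans (_ : a * (f * d ^ t) * exp 1 ^ t <= _); last first.
  exact: Rmult_le_compat_r.
rewrite Rpow_mult_distr.
rewrite (_ : a * (f * d ^ t) * exp 1 ^ t = a * ((f * exp 1 ^ t) * d ^ t)); last ring.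
by apply/Rmult_le_compat_l/Rmult_le_compat_r.
Qed.

Lemma le_Rpower_of_min1_pow (p q c y : R) (t : nat) :
  p <= 1 -> p <= q ^ t -> 0 < q <= c -> 0 <= y <= INR t -> p <= Rpower c y.
Proof.
move=> p_le1 p_le [q_pos q_le] [y_ge0 y_le].
have [q_le1|q_gt1] := Rle_lt_dec q 1.
  apply: Rle_trans p_le _; rewrite -(Rpower_pow t q q_pos).
  apply: Rle_trans (_ : Rpower q y <= _); last by apply: Rle_Rpower_l.
  by apply: exp_le_exp; have := ln_le_sub1 q_pos; nra.
apply: Rle_trans p_le1 _; rewrite -(Rpower_O c); last lra.
by apply: Rle_Rpower; lra.
Qed.

Lemma exists_nat_ceil x : 0 <= x -> exists t : nat, x <= INR t < x + 1.
Proof.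
move=> x_ge0; have [up_gt up_le] := archimed (- x).
have z_ge0 : (0 <= 1 - up (- x))%Z by apply: le_IZR; rewrite minus_IZR; lra.
exists (Z.to_nat (1 - up (- x))).
by rewrite INR_IZR_INZ Znat.Z2Nat.id // minus_IZR; lra.
Qed.

Lemma div_lt_of_lt_mul x y c : 0 < y -> x < c * y -> x / y < c.
Proof.
move=> y_pos lt_xy; apply: (Rmult_lt_reg_r y) => //.
by rewrite /Rdiv Rmult_assoc Rinv_l; lra.
Qed.

Lemma tail_exponent_le r m n a :
  0 < r -> 0 < m -> 0 < n -> 0 < a < 1 ->
  (1 - a) * r * m / 2 * ln (4 * exp 1 * m / ((1 - a) * n))
    <= - (r / 2) * (1 - a) * m * ln (n / m) + 3 * r * m.
Proof.
move=> r_pos m_pos n_pos a_bounds.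
have nm_pos : 0 < n / m by apply: Rdiv_lt_0_compat.
have ia_pos : 0 < / (1 - a) by apply: Rinv_0_lt_compat; lra.
have e_pos := exp_pos 1.
have -> : ln (4 * exp 1 * m / ((1 - a) * n))
          = ln 2 + ln 2 + 1 - ln (1 - a) - ln (n / m).
  rewrite (_ : 4 * exp 1 * m / ((1 - a) * n) = 2 * 2 * exp 1 * / (1 - a) * / (n / m));
    last by field; lra.
  set L := ln (n / m). (* protects [ln (n / m)] from [ln_mult] *)
  rewrite !ln_mult ?ln_exp ?ln_Rinv //; try lra.
    by repeat apply: Rmult_lt_0_compat; lra.
  exact: Rinv_0_lt_compat.
have ln2_le : ln 2 <= 2 - 1 by apply: ln_le_sub1; lra.
have ln2_gt := ln_lt_2.
have ln1a := ln_le_sub1 ia_pos; rewrite ln_Rinv in ln1a; last lra.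
have entropy_le : (1 - a) * - ln (1 - a) <= a.
  apply: Rle_trans (_ : (1 - a) * (/ (1 - a) - 1) <= _).
    by apply: Rmult_le_compat_l; lra.
  by right; field; lra.
have ln4e_le : (1 - a) * (ln 2 + ln 2 + 1) <= 1 * 3.
  by apply: Rmult_le_compat; lra.
have const_le : (1 - a) * (ln 2 + ln 2 + 1 - ln (1 - a)) <= 6 by lra.
have rm_ge0 : 0 <= r * m by nra.
have := Rmult_le_compat_l _ _ _ rm_ge0 const_le.
lra.
Qed.

Lemma dense_exponent_ge0 r m n a :
  0 <= r -> 0 < m -> 0 < n < 4 * m -> 0 < a < 1 ->
  0 <= - (r / 2) * (1 - a) * m * ln (n / m) + 3 * r * m.
Proof.
move=> r_ge0 m_pos [n_pos n_lt] a_bounds.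
have ln_lt : ln (n / m) < 3.
  apply: Rle_lt_trans (ln_le_sub1 (Rdiv_lt_0_compat _ _ n_pos m_pos)) _.
  by have := div_lt_of_lt_mul m_pos n_lt; lra.
have ln_le : (1 - a) * ln (n / m) <= 3.
  by have [?|?] := Rle_lt_dec 0 (ln (n / m)); nra.
have rm_ge0 : 0 <= r * m by nra.
have := Rmult_le_compat_l _ _ _ rm_ge0 ln_le.
lra.
Qed.

Local Close Scope R_scope.

Definition cut_event (n r : nat) (U : {set 'I_n}) (k : R) : {set {perm half n r}} :=
  [set s in pairings n r | if Rle_dec (INR (cut_edges U s)) k then true else false].

Section CutEvent.

Variables (n r : nat) (U : {set 'I_n}) (k : R).

Let A := [set h : half n r | h.1 \in U].

Lemma cut_event_sub (t : nat) :
  (2 * INR t - 2 < INR (#|U| * r) - k)%R ->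
  cut_event r U k \subset matchings_ge A (2 * t - 1).
Proof.
move=> t_small; apply/subsetP=> s; rewrite !inE => /andP [pair_s].
case: Rle_dec => // cut_le _; rewrite [fpf_involution s]pair_s /=.
have := cut_edges_add_matched_in U s; rewrite -/A => /(f_equal INR).
rewrite plus_INR => sum_eq.
have /INR_lt/ltP : (INR (2 * t) < INR (matched_in A s + 2))%R.
  by rewrite mult_INR plus_INR /=; lra.
lia.
Qed.

Lemma card_cut_event_le (t : nat) :
  (2 * INR t - 2 < INR (#|U| * r) - k)%R -> 2 * #|U| <= n ->
  #|cut_event r U k| * (t`! * expn (n * r - 2 * (#|U| * r)) t)
    <= #|pairings n r| * expn ((#|U| * r) * (#|U| * r)) t.
Proof.
move=> t_small U_small.
have A_small : 2 * #|A| <= #|half n r|.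
  by rewrite card_halves_at card_prod !card_ord; nia.
have := matchings_ge_tail t A_small.
rewrite -pairingsE card_halves_at card_prod !card_ord; apply: leq_trans.
by rewrite leq_mul2r subset_leq_card ?orbT // cut_event_sub.
Qed.

Lemma prob_cut_le_le1 : (prob_cut_le r U k <= 1)%R.
Proof.
rewrite /prob_cut_le; have [->|pos] := posnP #|pairings n r|.
  by rewrite Rdiv_0_r; lra.
have pos_R : (0 < INR #|pairings n r|)%R by apply/lt_0_INR/ltP.
rewrite -(Rdiv_diag (INR #|pairings n r|)); last lra.
apply/Rmult_le_compat_r; first by apply/Rlt_le/Rinv_0_lt_compat.
apply/le_INR/leP/subset_leq_card/subsetP=> s.
by rewrite !inE => /andP [].
Qed.

End CutEvent.

Lemma switching_base_le r m n a x :
  (0 < r -> 0 < m -> 4 * m <= n -> 0 < a < 1 -> (1 - a) * r * m / 2 <= x ->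
   0 < (r * m) * (r * m) * exp 1 / (x * (r * n - 2 * (r * m)))
     <= 4 * exp 1 * m / ((1 - a) * n))%R.
Proof.
move=> r_pos m_pos n_ge a_bounds x_ge.
have e_pos := exp_pos 1; have rm_pos : (0 < r * m)%R by nra.
have tau_pos : (0 < (1 - a) * r * m / 2)%R by nra.
have D_ge : (r * n / 2 <= r * n - 2 * (r * m))%R by nra.
have D_pos : (0 < r * n - 2 * (r * m))%R by nra.
have low_pos : (0 < (1 - a) * r * m / 2 * (r * n / 2))%R by nra.
have num_pos : (0 < r * m * (r * m) * exp 1)%R by repeat apply: Rmult_lt_0_compat.
split; first by apply: Rdiv_lt_0_compat => //; apply: Rmult_lt_0_compat; lra.
apply: (@Rle_trans _ (r * m * (r * m) * exp 1 / ((1 - a) * r * m / 2 * (r * n / 2)))).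
  apply/Rmult_le_compat_l; first lra.
  by apply: Rinv_le_contravar => //; apply: Rmult_le_compat; lra.
by right; field; repeat split; nra.
Qed.

Lemma prob_cut_le_sparse (n r : nat) (U : {set 'I_n}) (a : R) :
  0 < r -> 0 < #|U| -> 4 * #|U| <= n -> (0 < a < 1)%R ->
  (prob_cut_le r U (a * INR r * INR #|U|)
   <= exp (- (INR r / 2) * (1 - a) * INR #|U| * ln (INR n / INR #|U|)
           + 3 * INR r * INR #|U|))%R.
Proof.
move=> r_pos U_pos n_ge a_bounds; set m := #|U|.
have r_posR : (0 < INR r)%R by apply/lt_0_INR/ltP.
have m_posR : (0 < INR m)%R by apply/lt_0_INR/ltP.
have n_geR : (4 * INR m <= INR n)%R.
  by have := le_INR _ _ (elimT leP n_ge); rewrite mult_INR -/m /=; lra.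
set tau := ((1 - a) * INR r * INR m / 2)%R.
have tau_pos : (0 < tau)%R.
  by rewrite /tau /Rdiv; repeat apply: Rmult_lt_0_compat; lra.
have [t [tau_le t_lt]] : exists t : nat, (tau <= INR t < tau + 1)%R.
  by apply: exists_nat_ceil; lra.
have t_side : (2 * INR t - 2 < INR (m * r) - a * INR r * INR m)%R.
  by rewrite mult_INR; rewrite /tau in t_lt; lra.
have U_small : 2 * m <= n by lia.
move: (card_cut_event_le t_side U_small) => /leP/le_INR.
rewrite !mult_INR !INR_expn !mult_INR minus_INR;
  last by apply/leP; nia.
rewrite !mult_INR /= (Rmult_comm (INR m)) (Rmult_comm (INR n)).
rewrite (_ : 1 + 1 = 2)%R; last ring; move=> count.
have := prob_cut_le_le1 r U (a * INR r * INR m).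
rewrite /prob_cut_le; have [->|pair_pos] := posnP #|pairings n r|.
  by rewrite Rdiv_0_r => _; apply/Rlt_le/exp_pos.
move=> prob_le1.
have [q_pos q_le] := switching_base_le r_posR m_posR n_geR a_bounds tau_le.
apply: Rle_trans (le_Rpower_of_min1_pow prob_le1 _ (conj q_pos q_le) (conj _ tau_le)) _.
- apply: div_le_pow_of_fact_bound (pos_INR _) _ _ _ (pow_le_fact_exp1 t) count.
  + by apply/lt_0_INR/ltP.
  + lra.
  + nra.
- lra.
- by rewrite /Rpower; apply/exp_le_exp/tail_exponent_le; lra.
Qed.

Theorem lemma2 (r : nat) (hr : 3 <= r) :
  exists C5 Delta1 : R,
    forall (n : nat), ~~ odd (r * n) ->
    forall (U : {set 'I_n}) (alpha : R),
      (0 < alpha < 1)%R ->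
      let m := #|U| in
      (prob_cut_le r U (alpha * INR r * INR m)
       <= C5 * exp (- (INR r / 2) * (1 - alpha) * INR m * ln (INR n / INR m)
                    + Delta1 * INR m))%R.
Proof.
exists 1%R, (3 * INR r)%R => n _ U alpha alpha_bounds m.
rewrite Rmult_1_l.
have [m0|m_pos] := posnP m.
  apply: Rle_trans (prob_cut_le_le1 r U _) _; rewrite -[X in (X <= _)%R]exp_0.
  by apply: exp_le_exp; rewrite m0 /=; lra.
have [n_dense|n_sparse] := ltnP n (4 * m); last first.
  by apply: prob_cut_le_sparse => //; lia.
apply: Rle_trans (prob_cut_le_le1 r U _) _; rewrite -[X in (X <= _)%R]exp_0.
apply: exp_le_exp; apply: dense_exponent_ge0 => //; first exact: pos_INR.
  by apply/lt_0_INR/ltP.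
have m_le_n : m <= n by rewrite -[n]card_ord max_card.
split; first by apply/lt_0_INR/ltP; lia.
by have := lt_INR _ _ (elimT ltP n_dense); rewrite mult_INR /=; lra.
Qed.
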